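(* Let $\mathcal{T}$ be a tiling of $\mathbb{R}^d$ that is repetitive, has finite local complexity and has the Meyer property. Then for every finite $\mathcal{T}$-legal patch $\mathcal{P}$ and every $n>0$ there is $z\in\mathbb{R}^d\setminus\{0\}$ such that $\bigcup_{k=1}^n(\mathcal{P}+kz)$ is $\mathcal{T}$-legal. Moreover, for any unit vector $u$ and any $\delta>0$, $z$ can be chosen with $\|z/\|z\|-u\|<\delta$.
   Context: A tile in $\mathbb{R}^d$ is a compact set equal to the closure of its interior, possibly labeled from a finite set. A patch is a set of tiles with pairwise disjoint interiors; a tiling is a patch whose support is $\mathbb{R}^d$. A patch $\mathcal{P}$ is $\mathcal{T}$-legal if $\mathcal{P}+y\subset\mathcal{T}$ for some $y$. $\mathcal{P}\sqcap S=\{T\in\mathcal{P}:\operatorname{supp}T\cap S\neq\emptyset\}$. $\mathcal{T}$ has finite local complexity if for each compact $K$ the set $\{\mathcal{T}\sqcap(K+x)\}_x$ is finite up to translation, and is repetitive if for every finite $\mathcal{T}$-legal patch $\mathcal{P}$ there is $R>0$ such that every ball of radius $R$ contains the support of some translate $\mathcal{P}+x\subset\mathcal{T}$. $\mathcal{T}$ has the Meyer property if one can choose a point in the support of each tile, with the same relative position for tiles that are translates of each other, such that the resulting set $D$ is a Meyer set: a Delone set with $((D-D)-(D-D))\cap U=\{0\}$ for some neighbourhood $U$ of $0$. *)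

From HB Require Import structures.
From mathcomp Require Import all_boot all_order all_algebra.
From mathcomp Require Import all_classical all_reals topology normedtype.
Set Implicit Arguments. Unset Strict Implicit. Unset Printing Implicit Defensive.
Import Order.TTheory GRing.Theory Num.Theory.
Import numFieldNormedType.Exports.
Local Open Scope classical_set_scope.
Local Open Scope ring_scope.

Section Tilings.
Variables (R : realType) (d : nat) (L : finType).
Local Notation V := 'rV[R]_d.

Definition enorm (v : V) : R := Num.sqrt (\sum_(i < d) v 0 i ^+ 2).

(** A (labelled) tile: its support together with a label from the finite set L. *)
Definition tileT := (set V * L)%type.

Definition is_tile (t : tileT) : Prop :=
  compact t.1 /\ closure (interior t.1) = t.1.

Definition tile_tr (t : tileT) (y : V) : tileT := ((fun p => p + y) @` t.1, t.2).

Definition patch_tr (P : set tileT) (y : V) : set tileT :=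
  [set tile_tr t y | t in P].

Definition support (P : set tileT) : set V := \bigcup_(t in P) t.1.

Definition is_patch (P : set tileT) : Prop :=
  (forall t, P t -> is_tile t) /\
  (forall t t', P t -> P t' -> t <> t' -> interior t.1 `&` interior t'.1 = set0).

Definition is_tiling (T : set tileT) : Prop := is_patch T /\ support T = setT.

Definition legal (T P : set tileT) : Prop := exists y, patch_tr P y `<=` T.

Definition patch_meet (P : set tileT) (S : set V) : set tileT :=
  [set t | P t /\ t.1 `&` S !=set0].

Definition translate_set (S : set V) (x : V) : set V := (fun p => p + x) @` S.

Definition FLC (T : set tileT) : Prop :=
  forall K : set V, compact K ->
    exists F : set (set tileT), finite_set F /\
      forall x, exists2 P, F P & exists y, patch_meet T (translate_set K x) = patch_tr P y.

Definition eball (x : V) (r : R) : set V := [set p | enorm (p - x) < r].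

Definition repetitive (T : set tileT) : Prop :=
  forall P : set tileT, finite_set P -> legal T P ->
    exists2 r : R, 0 < r & forall x : V, exists y : V,
      patch_tr P y `<=` T /\ support (patch_tr P y) `<=` eball x r.

Definition uniformly_discrete (D : set V) : Prop :=
  exists2 r : R, 0 < r & forall p q, D p -> D q -> p <> q -> r <= enorm (p - q).

Definition relatively_dense (D : set V) : Prop :=
  exists2 r : R, 0 < r & forall x : V, eball x r `&` D !=set0.

Definition Delone (D : set V) : Prop := uniformly_discrete D /\ relatively_dense D.

Definition diffset (A B : set V) : set V := [set a - b | a in A & b in B].

Definition Meyer_set (D : set V) : Prop :=
  Delone D /\
  exists2 U : set V, nbhs (0 : V) U &
    diffset (diffset D D) (diffset D D) `&` U = [set 0].

Definition Meyer_property (T : set tileT) : Prop :=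
  exists c : tileT -> V,
    (forall t, T t -> t.1 (c t)) /\
    (forall t y, T t -> T (tile_tr t y) -> c (tile_tr t y) = c t + y) /\
    Meyer_set (c @` T).

End Tilings.

From Pilot Require Import Defs.
From HB Require Import structures.
From mathcomp Require Import all_boot all_order all_algebra.
From mathcomp Require Import all_classical all_reals topology normedtype.
From mathcomp Require Import ring lra zify.
Import Order.TTheory GRing.Theory Num.Theory.
Import numFieldNormedType.Exports.
Set Implicit Arguments. Unset Strict Implicit. Unset Printing Implicit Defensive.
Local Open Scope classical_set_scope.
Local Open Scope ring_scope.

(* Sample an occurrence Y_i of P near each point i s u of the ray spanned by u;
   repetitivity keeps the errors Y_i - i s u in a fixed ball. Color i by the
   cell of a fine grid containing its error: van der Waerden's theorem gives
   indices a + j m whose errors are pairwise close. The control points of the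
   occurrences form a Meyer set, so second differences of the Y's are either 0
   or bounded away from 0; the close ones thus vanish and Y_(a + j m) is an
   exact arithmetic progression with step z = m s u + (small error). Taking s
   large makes the direction of z as close to u as wanted. *)

Section VanDerWaerden.
Local Open Scope nat_scope.

Definition mono_ap (C : eqType) (f : nat -> C) (k a m : nat) :=
  forall j, j < k -> f (a + j * m) = f a.

(* The term [a + k * m] following the progression must also lie below [W]:
   the induction step uses it as the focus. *)
Definition has_mono_ap (C : eqType) (k W : nat) (f : nat -> C) :=
  exists a m, [/\ 0 < m, a + k * m < W & mono_ap f k a m].

Definition vdW k := forall C : finType, exists W, forall f : nat -> C, has_mono_ap k W f.

Lemma mono_ap_shift (C : eqType) (f : nat -> C) b k a m :
  mono_ap (fun x => f (b + x)) k a m -> mono_ap f k (b + a) m.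
Proof. by move=> fm j /fm; rewrite addnA. Qed.

Lemma mono_apS (C : eqType) (f : nat -> C) k a m :
  mono_ap f k a m -> f (a + k * m) = f a -> mono_ap f k.+1 a m.
Proof. by move=> fm fk j; rewrite ltnS leq_eqVlt => /predU1P[->|/fm]. Qed.

Lemma has_mono_ap_shift (C : eqType) (f : nat -> C) b k W W' :
  b + W <= W' -> has_mono_ap k W (fun x => f (b + x)) -> has_mono_ap k W' f.
Proof.
move=> bW [a [m [m_gt0 amW fm]]]; exists (b + a), m; split=> //.
  by rewrite -addnA (leq_trans _ bW) // ltn_add2l.
exact: mono_ap_shift.
Qed.

Lemma vdW1 : vdW 1.
Proof. by move=> C; exists 2 => f; exists 0, 1; split=> // j; rewrite ltnS leqn0 => /eqP->. Qed.

Section Focusing.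
Variables (C : finType) (k : nat).

(* [s] progressions of length [k] with distinct colors, all followed by the
   same term [F], their focus. *)
Definition focused_family (f : nat -> C) s F (A M : nat -> nat) :=
  [/\ forall i, i < s -> [/\ 0 < M i, A i + k * M i = F & mono_ap f k (A i) (M i)]
    & {in [pred i | i < s] &, injective (fun i => f (A i))}].

Definition focused (f : nat -> C) s W := exists F A M, F < W /\ focused_family f s F A M.

(* The old progressions of block [b], stretched by [B] blocks, and the copies
   of [F] in the blocks [b + j B] all focus on [F] in block [b + k B]. *)
Lemma focused_family_extend (f : nat -> C) s b B M0 F A M :
  (forall j x, j < k -> x < M0 -> f ((b + j * B) * M0 + x) = f (b * M0 + x)) ->
  0 < B -> F < M0 -> focused_family (fun x => f (b * M0 + x)) s F A M ->
  (forall i, i < s -> f (b * M0 + F) != f (b * M0 + A i)) ->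
  focused_family f s.+1 ((b + k * B) * M0 + F)
    (fun i => b * M0 + if i < s then A i else F)
    (fun i => if i < s then M i + B * M0 else B * M0).
Proof.
move=> blocks B_gt0 FM0 [fam inj] newF; split.
  move=> i; rewrite ltnS leq_eqVlt => /predU1P[->|ilt]; rewrite ?ltnn ?ilt.
    split=> [||j jk].
    - by rewrite muln_gt0 B_gt0; lia.
    - by rewrite mulnDl mulnA; lia.
    - by rewrite -(blocks j F jk FM0); congr f; rewrite mulnDl mulnA; lia.
  have [M_gt0 AF fm] := fam i ilt.
  split=> [||j jk].
  - by rewrite addn_gt0 M_gt0.
  - by rewrite -AF mulnDr mulnDl mulnA; lia.
  have jF : A i + j * M i < M0.
    by rewrite (leq_ltn_trans _ FM0) // -AF leq_add2l leq_mul2r (ltnW jk) orbT.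
  by rewrite -(fm j jk) -(blocks j _ jk jF); congr f; rewrite mulnDr mulnDl mulnA; lia.
move=> i j; rewrite !inE !ltnS [i <= s]leq_eqVlt [j <= s]leq_eqVlt.
move=> /predU1P[->|ilt] /predU1P[->|jlt]; rewrite ?ltnn ?ilt ?jlt //=.
- by move/eqP; rewrite (negbTE (newF j jlt)).
- by move/esym/eqP; rewrite (negbTE (newF i ilt)).
- by apply: inj; rewrite inE.
Qed.

Hypotheses (k_gt0 : 0 < k) (IH : vdW k).

Lemma focusing s : exists W, forall f : nat -> C, has_mono_ap k.+1 W f \/ focused f s W.
Proof.
elim: s => [|s [W HW]].
  by exists 1 => f; right; exists 0, id, id; split=> // i.
pose M0 := W.*2; have [Wb HWb] := IH {ffun 'I_M0 -> C}.
exists (Wb * M0) => f.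
have [b [B [B_gt0 bBW blockAP]]] := HWb (fun b => [ffun x : 'I_M0 => f (b * M0 + x)]).
have blocks j x : j < k -> x < M0 -> f ((b + j * B) * M0 + x) = f (b * M0 + x).
  move=> jk xM0; have := congr1 (fun g : {ffun 'I_M0 -> C} => g (Ordinal xM0)) (blockAP j jk).
  by rewrite !ffunE.
have inblock W' : W' <= M0 -> b * M0 + W' <= Wb * M0.
  move=> W'M0; rewrite (leq_trans (leq_add (leqnn _) W'M0)) // addnC -mulSn leq_mul2r.
  by rewrite (leq_ltn_trans (leq_addr _ _) bBW) orbT.
have WM0 : W <= M0 by rewrite /M0 -addnn leq_addr.
have [ap|[F [A [M [FW fam]]]]] := HW (fun x => f (b * M0 + x)).
  by left; apply: has_mono_ap_shift ap; apply: inblock.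
have FM0 : F < M0 by apply: leq_trans WM0.
have [/existsP[i /eqP hit]|miss] := boolP [exists i : 'I_s, f (b * M0 + F) == f (b * M0 + A i)].
  have [M_gt0 AF fm] := fam.1 i (ltn_ord i).
  have MF : M i <= F by rewrite -AF (leq_trans (leq_pmull _ k_gt0)) ?leq_addl.
  left; exists (b * M0 + A i), (M i); split=> //.
    rewrite -addnA (leq_trans _ (inblock M0 _)) // ltn_add2l mulSn addnCA AF.
    by rewrite (leq_ltn_trans (leq_add MF (leqnn F))) // addnn ltn_double.
  by apply: mono_apS (mono_ap_shift fm) _; rewrite -addnA AF.
right; exists ((b + k * B) * M0 + F); do 2 eexists; split; last first.
  apply: focused_family_extend blocks B_gt0 FM0 fam _ => i ilt.
  by apply: contra miss => hit; apply/existsP; exists (Ordinal ilt).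
apply: (@leq_trans ((b + k * B).+1 * M0)); first by rewrite mulSn [M0 + _]addnC ltn_add2l.
by rewrite leq_mul2r bBW orbT.
Qed.

End Focusing.

Lemma vdWS k : 0 < k -> vdW k -> vdW k.+1.
Proof.
move=> k_gt0 IH C; have [W HW] := focusing C k_gt0 IH #|C|.+1.
exists W => f; have [//|[F [A [M [_ [_ inj]]]]]] := HW f.
have : injective (fun i : 'I_#|C|.+1 => f (A i)).
  by move=> i j /inj E; apply: val_inj; apply: E; rewrite inE.
by move/leq_card; rewrite card_ord ltnn.
Qed.

Theorem van_der_waerden (C : finType) (f : nat -> C) k :
  exists a m, 0 < m /\ mono_ap f k a m.
Proof.
case: k => [|k]; first by exists 0, 1.
have /(_ C) [W /(_ f) [a [m [m_gt0 _ fm]]]] : vdW k.+1.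
  by elim: k => [|k IH]; [exact: vdW1 | exact: vdWS].
by exists a, m.
Qed.

End VanDerWaerden.

Section RowNorms.
Variables (R : realType) (d : nat).
Implicit Types (v : 'rV[R]_d).

Lemma coord_le_rV_norm v j : `|v 0 j| <= `|v|.
Proof.
rewrite [leRHS]/Num.Def.normr /= mx_normrE; apply/bigmax_geP; right; exists (0, j) => //.
Qed.

Lemma rV_norm_ltP v (e : R) : 0 < e -> `|v| < e <-> forall j, `|v 0 j| < e.
Proof.
move=> e_gt0; split=> [ve j|ve]; first exact: le_lt_trans (coord_le_rV_norm v j) ve.
rewrite [ltLHS]/Num.Def.normr /= mx_normrE; apply/bigmax_ltP; split=> // -[i j] _.
by rewrite [i]ord1; apply: ve.
Qed.
End RowNorms.

Section EuclideanNorm.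
Variables (R : realType) (d : nat).
Implicit Types (u v z eta : 'rV[R]_d).

Lemma enorm_sq v : enorm v ^+ 2 = \sum_(i < d) v 0 i ^+ 2.
Proof. by rewrite sqr_sqrtr // sumr_ge0 // => i _; rewrite sqr_ge0. Qed.

Lemma enorm_ge0 v : 0 <= enorm v.
Proof. exact: sqrtr_ge0. Qed.

Lemma enorm0 : enorm (0 : 'rV[R]_d) = 0.
Proof. by rewrite /enorm big1 ?sqrtr0 // => i _; rewrite mxE expr0n. Qed.

Lemma enorm_delta (j : 'I_d) : enorm (delta_mx 0 j : 'rV[R]_d) = 1.
Proof.
rewrite /enorm (bigD1 j) //= big1 => [|i /negbTE ij]; last by rewrite mxE ij andbF expr0n.
by rewrite mxE !eqxx expr1n addr0 sqrtr1.
Qed.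

Lemma coord_le_enorm v j : `|v 0 j| <= enorm v.
Proof.
rewrite -ler_sqr ?nnegrE ?enorm_ge0 // real_normK ?num_real // enorm_sq.
by rewrite (bigD1 j) //= lerDl sumr_ge0 // => i _; apply: sqr_ge0.
Qed.

Lemma rV_norm_le_enorm v : `|v| <= enorm v.
Proof.
rewrite [leLHS]/Num.Def.normr /= mx_normrE; apply/bigmax_leP.
by split=> [|[i j] _]; rewrite ?enorm_ge0 // [i]ord1 coord_le_enorm.
Qed.

Lemma enorm_normalizedB z u : enorm u = 1 -> 0 < enorm z ->
  enorm ((enorm z)^-1 *: z - u) ^+ 2 = 2 - 2 * (\sum_(i < d) z 0 i * u 0 i) / enorm z.
Proof.
move=> u1 z_gt0; set N := enorm z.
have z2 : \sum_(i < d) z 0 i ^+ 2 = N ^+ 2 by rewrite enorm_sq.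
have u2 : \sum_(i < d) u 0 i ^+ 2 = 1 by rewrite -enorm_sq u1 expr1n.
rewrite enorm_sq.
under eq_bigr => i _ do rewrite !mxE.
have -> : \sum_(i < d) (N^-1 * z 0 i - u 0 i) ^+ 2 =
    \sum_(i < d) (N^-1 ^+ 2 * z 0 i ^+ 2 - 2 * N^-1 * (z 0 i * u 0 i) + u 0 i ^+ 2).
  by apply: eq_bigr => i _; ring.
rewrite !big_split /= -!mulr_sumr sumrN -mulr_sumr z2 u2.
by field; rewrite gt_eqF.
Qed.

Lemma enorm_ray_sq u eta (a : R) : enorm u = 1 ->
  enorm (a *: u + eta) ^+ 2 =
    a ^+ 2 + 2 * a * (\sum_(i < d) eta 0 i * u 0 i) + \sum_(i < d) eta 0 i ^+ 2.
Proof.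
move=> u1; have u2 : \sum_(i < d) u 0 i ^+ 2 = 1 by rewrite -enorm_sq u1 expr1n.
rewrite enorm_sq; under eq_bigr => i _ do rewrite !mxE.
have -> : \sum_(i < d) (a * u 0 i + eta 0 i) ^+ 2 =
    \sum_(i < d) (a ^+ 2 * u 0 i ^+ 2 + 2 * a * (eta 0 i * u 0 i) + eta 0 i ^+ 2).
  by apply: eq_bigr => i _; ring.
by rewrite !big_split /= -!mulr_sumr u2 mulr1.
Qed.

Lemma ray_dot u eta (a : R) : enorm u = 1 ->
  \sum_(i < d) (a *: u + eta) 0 i * u 0 i = a + \sum_(i < d) eta 0 i * u 0 i.
Proof.
move=> u1; have u2 : \sum_(i < d) u 0 i ^+ 2 = 1 by rewrite -enorm_sq u1 expr1n.
under eq_bigr => i _ do rewrite !mxE.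
have -> : \sum_(i < d) (a * u 0 i + eta 0 i) * u 0 i =
    \sum_(i < d) (a * u 0 i ^+ 2 + eta 0 i * u 0 i) by apply: eq_bigr => i _; ring.
by rewrite big_split /= -mulr_sumr u2 mulr1.
Qed.

End EuclideanNorm.

Lemma normalized_error_bound (R : realFieldType) (a X Y N D e delta : R) :
  0 <= N -> N ^+ 2 = a ^+ 2 + 2 * a * X + Y -> `|X| <= D * e -> 0 <= Y <= D * e ^+ 2 ->
  0 <= D -> 0 < e -> 0 < delta -> 4 * D * e <= a -> 8 * D * e ^+ 2 < delta ^+ 2 * a ^+ 2 ->
  0 < N /\ 2 - 2 * (a + X) / N < delta ^+ 2.
Proof.
(* With S := a + X: 2 - 2 S / N = 2 (N^2 - S^2) / (N (N + S)), where
   N^2 - S^2 = Y - X^2 <= D e^2 while N (N + S) >= 5 a^2 / 8. *)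
move=> N_ge0 N2 + /andP[Y_ge0 YDe] D_ge0 e_gt0 delta_gt0 aDe adelta.
rewrite ler_norml => /andP[XlDe XrDe].
have a_ge0 : 0 <= a by apply: le_trans aDe; rewrite !mulr_ge0 // ltW.
have a_gt0 : 0 < a.
  rewrite lt0r a_ge0 andbT; apply: contraTneq adelta => ->.
  by rewrite -leNgt expr0n mulr0 !mulr_ge0 // ltW.
have Na : a / 2 <= N.
  have : a ^+ 2 / 4 <= N ^+ 2 by rewrite N2; nra.
  nra.
have N_gt0 : 0 < N by lra.
split=> //.
set S := a + X.
have S_ge : 3 / 4 * a <= S by rewrite /S; nra.
have NS : (N - S) * (N + S) <= D * e ^+ 2.
  have -> : (N - S) * (N + S) = N ^+ 2 - S ^+ 2 by ring.
  by rewrite N2 /S; nra.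
have NNS : delta ^+ 2 * (5 / 8 * a ^+ 2) <= delta ^+ 2 * (N * (N + S)).
  by rewrite ler_wpM2l ?sqr_ge0 //; nra.
have : 2 * (N - S) * (N + S) < delta ^+ 2 * N * (N + S) by nra.
rewrite ltr_pM2r; last by lra.
have -> : 2 - 2 * S / N = 2 * (N - S) / N by field; rewrite gt_eqF.
by rewrite ltr_pdivrMr.
Qed.

Section Approximation.
Variables (R : realType) (d : nat).

Lemma normalized_near_ray (u : 'rV[R]_d) (e delta : R) :
  enorm u = 1 -> 0 < e -> 0 < delta ->
  exists2 s : R, 0 < s & forall (a : R) (eta : 'rV[R]_d), s <= a -> `|eta| < e ->
    a *: u + eta != 0 /\ enorm ((enorm (a *: u + eta))^-1 *: (a *: u + eta) - u) < delta.
Proof.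
move=> u1 e_gt0 delta_gt0; set D : R := d%:R.
have D_ge0 : 0 <= D by rewrite ler0n.
have De_ge0 : 0 <= D * e by rewrite mulr_ge0 // ltW.
have De_delta_gt0 : 0 < 3 * (D + 1) * e / delta.
  by rewrite divr_gt0 // !mulr_gt0 // ltr_wpDl.
exists (4 * D * e + 3 * (D + 1) * e / delta) => [|a eta sa eta_e]; first lra.
have eta_i i : `|eta 0 i| < e by apply: (rV_norm_ltP _ e_gt0).1.
have u_i i : `|u 0 i| <= 1 by rewrite -u1 coord_le_enorm.
have sum_const_e (c : R) : \sum_(i < d) c = D * c by rewrite sumr_const card_ord mulr_natl.
set X := \sum_(i < d) eta 0 i * u 0 i; set Y := \sum_(i < d) eta 0 i ^+ 2.
have X_le : `|X| <= D * e.
  rewrite -sum_const_e; apply: le_trans (ler_norm_sum _ _ _) _; apply: ler_sum => i _.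
  by rewrite normrM -[e]mulr1; apply: ler_pM => //; apply: ltW.
have Y_le : 0 <= Y <= D * e ^+ 2.
  rewrite sumr_ge0 => [|i _]; last exact: sqr_ge0.
  rewrite -sum_const_e ler_sum // => i _.
  by have := eta_i i; rewrite ltr_norml => /andP[? ?]; nra.
have a_delta : 3 * (D + 1) * e <= delta * a.
  by rewrite [delta * a]mulrC -ler_pdivrMr //; lra.
have aDe : 4 * D * e <= a by lra.
have a8 : 8 * D * e ^+ 2 < delta ^+ 2 * a ^+ 2.
  have q_gt0 : 0 < 3 * (D + 1) * e by rewrite !mulr_gt0 // ltr_wpDl.
  have : (3 * (D + 1) * e) ^+ 2 <= (delta * a) ^+ 2.
    by rewrite ler_sqr ?nnegrE ?(ltW q_gt0) ?(le_trans (ltW q_gt0) a_delta).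
  have e2_gt0 : 0 < e ^+ 2 by rewrite exprn_gt0.
  rewrite exprMn; nra.
have [N_gt0 err] := normalized_error_bound (enorm_ge0 _) (enorm_ray_sq eta a u1)
  X_le Y_le D_ge0 e_gt0 delta_gt0 aDe a8.
split; first by apply: contraTneq N_gt0 => ->; rewrite enorm0 ltxx.
by rewrite -ltr_sqr ?nnegrE ?enorm_ge0 ?ltW // enorm_normalizedB // ray_dot.
Qed.

Lemma trunc_div_close (x y eps : R) : 0 < eps -> 0 <= x -> 0 <= y ->
  Num.truncn (x / eps) = Num.truncn (y / eps) -> `|x - y| < eps.
Proof.
move=> eps_gt0 x_ge0 y_ge0 xy.
have := truncn_itv (divr_ge0 x_ge0 (ltW eps_gt0)).
have := truncn_itv (divr_ge0 y_ge0 (ltW eps_gt0)).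
rewrite xy -natr1 => /andP[y1 y2] /andP[x1 x2].
have : `|x / eps - y / eps| < 1 by rewrite ltr_norml; apply/andP; split; lra.
by rewrite -mulrBl normrM normfV (gtr0_norm eps_gt0) ltr_pdivrMr // mul1r.
Qed.

Lemma ball_fine_coloring (r eps : R) : 0 < eps ->
  exists N (cell : 'rV[R]_d -> {ffun 'I_d -> 'I_N}),
    forall v w, `|v| < r -> `|w| < r -> cell v = cell w -> `|v - w| < eps.
Proof.
move=> eps_gt0; pose idx (x : R) := Num.truncn ((x + r) / eps).
exists (idx r).+1, (fun v => [ffun j => inord (idx (v 0 j))]) => v w vr wr vw.
have r_gt0 : 0 < r by apply: le_lt_trans vr.
have coord x : `|x| < r -> [/\ 0 <= x + r & (idx x < (idx r).+1)%N].
  rewrite ltr_norml ltnS => /andP[rx xr]; split; first lra.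
  by apply: le_truncn; rewrite ler_pM2r ?invr_gt0 // lerD2r ltW.
apply/(rV_norm_ltP _ eps_gt0) => j; rewrite !mxE.
have [vj_ge0 vj_lt] := coord _ ((rV_norm_ltP _ r_gt0).1 vr j).
have [wj_ge0 wj_lt] := coord _ ((rV_norm_ltP _ r_gt0).1 wr j).
have := congr1 (fun c : {ffun 'I_d -> 'I_(idx r).+1} => val (c j)) vw.
rewrite /= !ffunE !inordK // => /trunc_div_close => /(_ eps_gt0 vj_ge0 wj_ge0).
by rewrite opprD addrACA subrr addr0.
Qed.

End Approximation.

Definition rigid (R : realType) d (O : set 'rV[R]_d) (rho : R) :=
  forall y1 y2 y3 y4, O y1 -> O y2 -> O y3 -> O y4 ->
    `|(y1 - y2) - (y3 - y4)| < rho -> y1 - y2 = y3 - y4.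

Section Progressions.
Variables (R : realType) (d : nat) (O : set 'rV[R]_d) (rho r : R).
Hypotheses (rho_gt0 : 0 < rho) (O_rigid : rigid O rho).
Hypothesis O_dense : forall x, exists2 y, O y & `|y - x| < r.

Lemma progression_near_ray (w : 'rV[R]_d) (n : nat) :
  exists y z (m : nat), [/\ (0 < m)%N, forall j, (j <= n)%N -> O (y + j%:R *: z)
    & `|z - m%:R *: w| < rho / 2].
Proof.
have samples (i : nat) : exists y, O y /\ `|y - i%:R *: w| < r.
  by have [y Oy yi] := O_dense (i%:R *: w); exists y.
have [Y YP] := choice samples.
have [|N [cell cellP]] := ball_fine_coloring d r (_ : 0 < rho / 2); first by rewrite divr_gt0.
(* One more term than needed, so that the step [p 1 - p 0] is controlled even if [n = 0]. *)
have [a [m [m_gt0 mono]]] := van_der_waerden (fun i => cell (Y i - i%:R *: w)) n.+2.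
pose p j := Y (a + j * m)%N; pose err j := p j - (a + j * m)%:R *: w.
have close i j : (i <= n.+1)%N -> (j <= n.+1)%N -> `|err i - err j| < rho / 2.
  move=> /mono ci /mono cj.
  by apply: cellP; [exact: (YP _).2 | exact: (YP _).2 | rewrite ci cj].
have second_diff i1 i2 i3 i4 : (i1 + i4 = i2 + i3)%N ->
    (p i1 - p i2) - (p i3 - p i4) = (err i1 - err i3) - (err i2 - err i4).
  move=> i_eq; have i1E : i1%:R = i2%:R + i3%:R - i4%:R :> R.
    by rewrite -natrD -i_eq natrD addrK.
  by apply/rowP => k; rewrite /err !mxE !natrD !natrM i1E; ring.
pose z := p 1%N - p 0%N.
have step j : (j < n)%N -> p j.+1 = p j + z.
  move=> jn; suff <- : p j.+1 - p j = z by rewrite addrC subrK.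
  apply: O_rigid; try exact: (YP _).1.
  rewrite second_diff ?addn0 ?addn1 // (splitr rho).
  by apply: le_lt_trans (ler_normB _ _) (ltrD _ _); apply: close; lia.
have ap j : (j <= n)%N -> p j = p 0%N + j%:R *: z.
  elim: j => [|j IH] jn; first by rewrite scale0r addr0.
  rewrite step // IH; last exact: ltnW.
  by rewrite -addrA -natr1 scalerDl scale1r.
exists (p 0%N), z, m; split=> // [j jn|]; first by rewrite -ap //; apply: (YP _).1.
have -> : z - m%:R *: w = err 1%N - err 0%N.
  by apply/rowP => k; rewrite /z /err mul1n mul0n addn0 !mxE natrD; ring.
by apply: close.
Qed.

End Progressions.

Lemma Meyer_set_rigid (R : realType) d (D : set 'rV[R]_d) :
  Meyer_set D -> exists2 rho : R, 0 < rho & rigid D rho.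
Proof.
move=> [_ [U /nbhs_ballP[rho rho_gt0 rhoU] DU]]; exists rho => //.
move=> y1 y2 y3 y4 D1 D2 D3 D4 small.
apply/eqP; rewrite -subr_eq0; apply/eqP.
have : (diffset (diffset D D) (diffset D D) `&` U) ((y1 - y2) - (y3 - y4)).
  split; last by apply: rhoU; rewrite -ball_normE /ball_ /= sub0r normrN.
  exists (y1 - y2); first by exists y1 => //; exists y2.
  by exists (y3 - y4) => //; exists y3 => //; exists y4.
by rewrite DU.
Qed.

Section Occurrences.
Variables (R : realType) (d : nat) (L : finType) (T P : set (tileT R d L)).

Definition occurrences : set 'rV[R]_d := [set y | patch_tr P y `<=` T].

Lemma tile_tr_comp (t : tileT R d L) a b : tile_tr (tile_tr t a) b = tile_tr t (a + b).
Proof.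
rewrite /tile_tr /=; congr (_, _); apply/seteqP; split => p.
  by case=> q [x Sx <-] <-; exists x => //; rewrite addrA.
by case=> x Sx <-; exists (x + a); [exists x | rewrite addrA].
Qed.

Lemma legal_progression (y z : 'rV[R]_d) n :
  (forall k, (1 <= k <= n)%N -> occurrences (y + k%:R *: z)) ->
  legal T (\bigcup_(k in [set k : nat | (1 <= k <= n)%N]) patch_tr P (k%:R *: z)).
Proof.
move=> occ; exists y => _ [t [k kn [t0 Pt0 <-]] <-].
by rewrite tile_tr_comp addrC; apply: occ kn _ _; exists t0.
Qed.

Variable c : tileT R d L -> 'rV[R]_d.
Hypothesis c_tr : forall t y, T t -> T (tile_tr t y) -> c (tile_tr t y) = c t + y.
Variables (t0 : tileT R d L) (y0 : 'rV[R]_d).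
Hypotheses (Pt0 : P t0) (occ_y0 : occurrences y0).

Lemma control_point_occurrence y :
  occurrences y -> c (tile_tr t0 y) = c (tile_tr t0 y0) - y0 + y.
Proof.
move=> occ_y; have E : tile_tr t0 y = tile_tr (tile_tr t0 y0) (y - y0).
  by rewrite tile_tr_comp addrC subrK.
rewrite E c_tr; first by rewrite [y - y0]addrC addrA.
  by apply: occ_y0; exists t0.
by rewrite -E; apply: occ_y; exists t0.
Qed.

Lemma occurrences_rigid rho : rigid (c @` T) rho -> rigid occurrences rho.
Proof.
move=> D_rigid y1 y2 y3 y4 o1 o2 o3 o4; set q := c (tile_tr t0 y0) - y0.
have inD y : occurrences y -> (c @` T) (q + y).
  move=> occ_y; exists (tile_tr t0 y); last exact: control_point_occurrence.
  by apply: occ_y; exists t0.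
have shift a b : (q + a) - (q + b) = a - b by rewrite opprD addrACA subrr add0r.
by have := D_rigid _ _ _ _ (inD _ o1) (inD _ o2) (inD _ o3) (inD _ o4); rewrite !shift.
Qed.

Lemma occurrences_dense : (forall t, T t -> t.1 (c t)) -> repetitive T -> finite_set P ->
  exists r : R, forall x, exists2 y, occurrences y & `|y - x| < r.
Proof.
move=> c_in rep Pfin; set q := c (tile_tr t0 y0) - y0.
have [r _ rP] := rep P Pfin (ex_intro _ y0 occ_y0).
exists r => x; have [y [occ_y suppP]] := rP (x + q); exists y => //.
apply: le_lt_trans (rV_norm_le_enorm _) _.
have : Defs.support (patch_tr P y) (c (tile_tr t0 y)).
  by exists (tile_tr t0 y); [exists t0 | apply: c_in; apply: occ_y; exists t0].
move/suppP; rewrite /eball /= control_point_occurrence // -/q.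
by rewrite [x + q]addrC opprD addrACA subrr add0r.
Qed.

End Occurrences.

Lemma legal_progression_near_direction (R : realType) d (L : finType)
    (T P : set (tileT R d L)) (n : nat) (u : 'rV[R]_d) (delta : R) :
  repetitive T -> Meyer_property T -> finite_set P -> legal T P ->
  enorm u = 1 -> 0 < delta ->
  exists z : 'rV[R]_d, z <> 0 /\
    legal T (\bigcup_(k in [set k : nat | (1 <= k <= n)%N]) patch_tr P (k%:R *: z)) /\
    enorm ((enorm z)^-1 *: z - u) < delta.
Proof.
move=> rep [c [c_in [c_tr Meyer]]] Pfin [y0 occ_y0] u1 delta_gt0.
have [[t0 Pt0]|P0] := pselect (P !=set0); last first.
  exists u; split; first by move=> u0; move: (oner_neq0 R); rewrite -u1 u0 enorm0 eqxx.
  split; last by rewrite u1 invr1 scale1r subrr enorm0.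
  by apply: (legal_progression (y := 0)) => k _ x [t Pt _]; case: P0; exists t.
have [rho rho_gt0 D_rigid] := Meyer_set_rigid Meyer.
have O_rigid := occurrences_rigid c_tr Pt0 occ_y0 D_rigid.
have [r O_dense] := occurrences_dense c_tr Pt0 occ_y0 c_in rep Pfin.
have [|s s_gt0 sP] := normalized_near_ray u1 (_ : 0 < rho / 2) delta_gt0.
  by rewrite divr_gt0.
have [y [z [m [m_gt0 zAP z_near]]]] := progression_near_ray rho_gt0 O_rigid O_dense (s *: u) n.
rewrite scalerA in z_near.
have [] := sP (m%:R * s) (z - (m%:R * s) *: u) _ z_near.
  by apply: ler_peMl; [apply: ltW | rewrite ler1n].
rewrite addrC subrK => /eqP z0 z_dir; exists z; split=> //; split=> //.
by apply: (legal_progression (y := y)) => k /andP[_ kn]; apply: zAP.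
Qed.

Unset Implicit Arguments.

Theorem corollary2p11 (R : realType) (d : nat) (L : finType)
  (T : set (tileT R d L)) :
  (0 < d)%N ->
  is_tiling T -> repetitive T -> FLC T -> Meyer_property T ->
  forall P : set (tileT R d L), finite_set P -> legal T P ->
  forall n : nat, (0 < n)%N ->
    (exists z : 'rV[R]_d, z <> 0 /\
       legal T (\bigcup_(k in [set k : nat | (1 <= k <= n)%N]) patch_tr P (k%:R *: z)))
    /\
    (forall (u : 'rV[R]_d) (delta : R), enorm u = 1 -> 0 < delta ->
       exists z : 'rV[R]_d, z <> 0 /\
         legal T (\bigcup_(k in [set k : nat | (1 <= k <= n)%N]) patch_tr P (k%:R *: z)) /\
         enorm ((enorm z)^-1 *: z - u) < delta).
Proof.
move=> d_gt0 _ rep _ Meyer P Pfin Pleg n _.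
split; last by move=> u delta; apply: legal_progression_near_direction.
have [z [z0 [zleg _]]] := legal_progression_near_direction n rep Meyer Pfin Pleg
  (enorm_delta R (Ordinal d_gt0)) ltr01.
by exists z.
Qed.
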